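(* Let $K_1,K_2$ be two $q$-edge-colored ordered complete graphs, and let $S\subseteq[q]$ be an arbitrary set of colors. Let $L_1,L_2$ be the lengths of the longest monotone $S$-colored paths in $K_1,K_2$ respectively. Then the length of the longest $S$-colored monotone path in $K_1\otimes K_2$ is exactly $L_1L_2$.
   Context: An ordered complete graph is a complete graph with a linear order on its vertices; colors are from $[q]$. A path $v_1,\dots,v_L$ is monotone if $v_1<\dots<v_L$; its length is its number of vertices; it is $S$-colored if every edge of it has a color in $S$. The lexicographic product $K_1\otimes K_2$ is the $q$-edge-colored ordered complete graph on vertex set $V(K_2)\times V(K_1)$, ordered lexicographically with the $K_2$-coordinate compared first, where the edge between $(u,x)$ and $(w,y)$ receives the color of $uw$ in $K_2$ if $u\neq w$, and the color of $xy$ in $K_1$ if $u=w$. *)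

From mathcomp Require Import all_boot all_order.
Set Implicit Arguments. Unset Strict Implicit. Unset Printing Implicit Defensive.

(* A q-edge-colored ordered complete graph on vertex type T: a strict
   linear order [lt] on T and a colour function [c]; the colour of the edge
   {u,w} with u < w is [c u w] (the value of c on other pairs is irrelevant,
   since it is only ever queried with the smaller vertex first). *)

(* p is a monotone S-colored path: strictly increasing, and every edge
   between consecutive vertices has a colour in S. Its length = size p. *)
Definition mono_S_path (T : Type) (q : nat) (lt : rel T)
    (c : T -> T -> 'I_q) (S : {set 'I_q}) (p : seq T) : bool :=
  sorted lt p && all (fun e => c e.1 e.2 \in S) (zip p (behead p)).

Definition longest_mono_S (T : Type) (q : nat) (lt : rel T)
    (c : T -> T -> 'I_q) (S : {set 'I_q}) (L : nat) : Prop :=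
  (exists p, mono_S_path lt c S p /\ size p = L) /\
  (forall p, mono_S_path lt c S p -> size p <= L).

Definition ord_lt (n : nat) : rel 'I_n := fun i j => (i < j)%N.

Definition lex_lt (n2 n1 : nat) : rel ('I_n2 * 'I_n1) :=
  fun a b => ((a.1 < b.1)%N || ((a.1 == b.1) && (a.2 < b.2)%N)).

Definition lex_col (q n1 n2 : nat) (c1 : 'I_n1 -> 'I_n1 -> 'I_q)
    (c2 : 'I_n2 -> 'I_n2 -> 'I_q) (a b : 'I_n2 * 'I_n1) : 'I_q :=
  if a.1 != b.1 then c2 a.1 b.1 else c1 a.2 b.2.

From mathcomp Require Import all_boot all_order.
From mathcomp Require Import zify.
Set Implicit Arguments. Unset Strict Implicit. Unset Printing Implicit Defensive.

(* Lower bound: run a longest path of K1 inside each vertex of a longest path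
   of K2, in order; consecutive runs are joined by an edge of K2.
   Upper bound: a monotone path of the product splits into maximal runs with
   constant K2-coordinate. The successive K2-coordinates form a monotone
   S-path of K2 (at most L2 of them) and each run projects to a monotone
   S-path of K1 (at most L1 vertices each). *)

Section MonotonePaths.

Variables (T : Type) (q : nat) (lt : rel T) (c : T -> T -> 'I_q).
Variable S : {set 'I_q}.

Local Notation mono := (mono_S_path lt c S).

Lemma mono_S_path_cons2 a b l :
  mono [:: a, b & l] = [&& lt a b, c a b \in S & mono (b :: l)].
Proof.
rewrite /mono_S_path /=.
by case: (lt a b); case: (c a b \in S); rewrite ?andbF.
Qed.

Lemma mono_S_path_cat a s b t :
  mono (a :: s) -> mono (b :: t) -> lt (last a s) b -> c (last a s) b \in S ->
  mono (a :: s ++ b :: t).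
Proof.
elim: s a => [|a' s IHs] a /=; first by rewrite mono_S_path_cons2 => _ -> -> ->.
rewrite !mono_S_path_cons2 => /and3P [lt_aa' Saa' mono_s] mono_t lt_last S_last.
by rewrite lt_aa' Saa' IHs.
Qed.

End MonotonePaths.

Section LexicographicProduct.

Variables (q n1 n2 : nat) (S : {set 'I_q}).
Variables (c1 : 'I_n1 -> 'I_n1 -> 'I_q) (c2 : 'I_n2 -> 'I_n2 -> 'I_q).

Local Notation mono1 := (mono_S_path (@ord_lt n1) c1 S).
Local Notation mono2 := (mono_S_path (@ord_lt n2) c2 S).
Local Notation mono := (mono_S_path (@lex_lt n2 n1) (lex_col c1 c2) S).

Lemma mono_S_path_fiber (u : 'I_n2) p : mono1 p -> mono (map (pair u) p).
Proof.
case: p => [|x p] //=; elim: p x => [|y p IHp] x //=.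
rewrite !mono_S_path_cons2 => /and3P [lt_xy S_xy mono_p].
rewrite /ord_lt in lt_xy.
by rewrite /lex_lt /lex_col /= eqxx ltnn lt_xy S_xy IHp.
Qed.

Lemma mono_S_path_allpairs p2 p1 :
  mono2 p2 -> mono1 p1 -> mono [seq (u, x) | u <- p2, x <- p1].
Proof.
case: p1 => [|x0 p1] mono_p2 mono_p1; first by rewrite allpairs0r.
case: p2 mono_p2 => [|u p2] //; elim: p2 u => [|v p2 IHp2] u.
  by rewrite allpairs1l => _; apply: mono_S_path_fiber.
rewrite mono_S_path_cons2 => /and3P [lt_uv S_uv mono_p2].
rewrite /ord_lt in lt_uv.
rewrite allpairs_cons /=; apply: mono_S_path_cat.
- exact: (mono_S_path_fiber u mono_p1).
- exact: IHp2.
- by rewrite last_map /lex_lt /= lt_uv.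
- have u_neq_v : u != v by rewrite neq_ltn lt_uv.
  by rewrite last_map /lex_col /= u_neq_v.
Qed.

Variable L1 : nat.
Hypothesis longest1 : forall p, mono1 p -> size p <= L1.

(* [Q] lists the K2-coordinates of the later runs, [R] the rest of the first run. *)
Lemma mono_S_path_runs x P : mono (x :: P) ->
  exists Q R, [/\ mono2 (x.1 :: Q), mono1 (x.2 :: R) &
                  size P <= size R + L1 * size Q].
Proof.
elim: P x => [|[v b] P IHP] [u a]; first by exists [::], [::].
rewrite mono_S_path_cons2 => /and3P [lt_ab S_ab mono_P].
have [Q [R [/= mono_Q mono_R size_P]]] := IHP _ mono_P.
move: lt_ab S_ab; rewrite /lex_lt /lex_col /=.
have [->|new_run] := eqVneq u v; rewrite /= ?ltnn /= ?orbF => lt_ab S_ab.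
  exists Q, (b :: R); split=> //.
  by rewrite mono_S_path_cons2 /ord_lt lt_ab S_ab.
exists (v :: Q), [::]; split=> //.
  by rewrite mono_S_path_cons2 /ord_lt lt_ab S_ab.
have := longest1 mono_R; rewrite /= in size_P *; lia.
Qed.

Lemma size_mono_S_path_le p L2 :
  (forall p2, mono2 p2 -> size p2 <= L2) -> mono p -> size p <= L1 * L2.
Proof.
case: p => [|x P] // longest2 /mono_S_path_runs [Q [R [mono_Q mono_R size_P]]].
have := longest1 mono_R; have := longest2 _ mono_Q.
rewrite /= in size_P *; nia.
Qed.

End LexicographicProduct.

Theorem proposition3p3 (q n1 n2 : nat)
    (c1 : 'I_n1 -> 'I_n1 -> 'I_q) (c2 : 'I_n2 -> 'I_n2 -> 'I_q)
    (S : {set 'I_q}) (L1 L2 : nat) :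
  longest_mono_S (@ord_lt n1) c1 S L1 ->
  longest_mono_S (@ord_lt n2) c2 S L2 ->
  longest_mono_S (@lex_lt n2 n1) (lex_col c1 c2) S (L1 * L2).
Proof.
move=> [[p1 [mono_p1 size_p1]] longest1] [[p2 [mono_p2 size_p2]] longest2].
split; last by move=> p; apply: size_mono_S_path_le.
exists [seq (u, x) | u <- p2, x <- p1]; split.
  exact: mono_S_path_allpairs.
by rewrite size_allpairs size_p1 size_p2 mulnC.
Qed.
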